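(* Let $\mathbb{P}: M_2 \to M_2$ be the linear map $$\mathbb{P}\begin{pmatrix} x_{11} & x_{12} \\ x_{21} & x_{22}\end{pmatrix} = \begin{pmatrix} \frac{x_{11}+x_{22}}{2} & x_{12} \\ x_{21} & \frac{x_{11}+x_{22}}{2}\end{pmatrix}.$$ For a constant $\kappa_3$, define the linear map $\Phi_3$ on operators on $\mathbb{C}^2\otimes\mathbb{C}^2\otimes\mathbb{C}^2$ by $$\Phi_3(\varrho) = (\mathbb{P}\otimes\mathbb{I}\otimes\mathbb{I})(\varrho) + (\mathbb{I}\otimes\mathbb{P}\otimes\mathbb{I})(\varrho) + (\mathbb{I}\otimes\mathbb{I}\otimes\mathbb{P})(\varrho) + \kappa_3\, \mathrm{Tr}(\varrho)\, I,$$ where $\mathbb{I}$ is the identity map on $M_2$ and $I$ is the $8\times 8$ identity matrix. If $\kappa_3=\frac12$, then $\Phi_3(\rho)\ge 0$ for every biseparable three-qubit state $\rho$.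
   Context: A three-qubit state $\rho$ is biseparable if it can be written as $\rho = p_1\,\rho_1\otimes\rho_{23} + p_2\,\rho_2\otimes\rho_{13} + p_3\,\rho_3\otimes\rho_{12}$ (each term being a convex combination of product states across the indicated bipartition $1|23$, $2|13$, $3|12$ respectively, with the tensor factors placed on the indicated qubits), where $p_i\ge 0$, $\sum_i p_i=1$, and $\rho_i$, $\rho_{jk}$ are density matrices on the indicated qubits. $M_2$ is the space of complex $2\times 2$ matrices. *)

From HB Require Import structures.
From mathcomp Require Import all_boot all_order all_algebra.
Set Implicit Arguments. Unset Strict Implicit. Unset Printing Implicit Defensive.
Import Order.TTheory GRing.Theory Num.Theory.
Local Open Scope ring_scope.
Local Open Scope sesquilinear_scope.

(* Scalars: an arbitrary numClosedFieldType C (e.g. the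
   complex numbers); order on C: 0 <= z means z real and nonnegative. *)

Section QuantumDefs.
Variable C : numClosedFieldType.

Definition psdmx n (A : 'M[C]_n) : Prop :=
  A ^t* = A /\ forall x : 'cV[C]_n, 0 <= (x ^t* *m A *m x) 0 0.

Definition density n (A : 'M[C]_n) : Prop := psdmx A /\ \tr A = 1.

(* Three-qubit basis |a b c> is indexed by 4a + 2b + c in 'I_8
   (qubit 1 is the most significant). *)
Definition q3 (a b c : 'I_2) : 'I_8 := inord (4 * a + 2 * b + c).
Definition bit1 (i : 'I_8) : 'I_2 := inord (i %/ 4).
Definition bit2 (i : 'I_8) : 'I_2 := inord ((i %/ 2) %% 2).
Definition bit3 (i : 'I_8) : 'I_2 := inord (i %% 2).
Definition q2 (a b : 'I_2) : 'I_4 := inord (2 * a + b).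

(* Product operators across the three bipartitions, with the factors
   placed on the indicated qubits:
   prod1_23 A B = A (qubit 1) ⊗ B (qubits 2,3)
   prod2_13 A B = A (qubit 2) ⊗ B (qubits 1,3)
   prod3_12 A B = A (qubit 3) ⊗ B (qubits 1,2) *)
Definition prod1_23 (A : 'M[C]_2) (B : 'M[C]_4) : 'M[C]_8 :=
  \matrix_(i, j) (A (bit1 i) (bit1 j) *
                  B (q2 (bit2 i) (bit3 i)) (q2 (bit2 j) (bit3 j))).
Definition prod2_13 (A : 'M[C]_2) (B : 'M[C]_4) : 'M[C]_8 :=
  \matrix_(i, j) (A (bit2 i) (bit2 j) *
                  B (q2 (bit1 i) (bit3 i)) (q2 (bit1 j) (bit3 j))).
Definition prod3_12 (A : 'M[C]_2) (B : 'M[C]_4) : 'M[C]_8 :=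
  \matrix_(i, j) (A (bit3 i) (bit3 j) *
                  B (q2 (bit1 i) (bit2 i)) (q2 (bit1 j) (bit2 j))).

Definition prod_cut (k : 'I_3) (A : 'M[C]_2) (B : 'M[C]_4) : 'M[C]_8 :=
  if val k == 0%N then prod1_23 A B
  else if val k == 1%N then prod2_13 A B
  else prod3_12 A B.

Definition sep_cut (k : 'I_3) (sigma : 'M[C]_8) : Prop :=
  exists (N : nat) (w : 'I_N -> C) (A : 'I_N -> 'M[C]_2) (B : 'I_N -> 'M[C]_4),
    (forall t, 0 <= w t) /\ \sum_t w t = 1 /\
    (forall t, density (A t)) /\ (forall t, density (B t)) /\
    sigma = \sum_t w t *: prod_cut k (A t) (B t).

Definition biseparable (rho : 'M[C]_8) : Prop :=
  exists (p1 p2 p3 : C) (s1 s2 s3 : 'M[C]_8),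
    0 <= p1 /\ 0 <= p2 /\ 0 <= p3 /\ p1 + p2 + p3 = 1 /\
    sep_cut (inord 0) s1 /\ sep_cut (inord 1) s2 /\ sep_cut (inord 2) s3 /\
    rho = p1 *: s1 + p2 *: s2 + p3 *: s3.

Definition Pmap (X : 'M[C]_2) : 'M[C]_2 :=
  \matrix_(i, j) (if i == j then (X 0 0 + X 1 1) / 2 else X i j).

(* (L ⊗ I ⊗ I), (I ⊗ L ⊗ I), (I ⊗ I ⊗ L) for a linear map L on M_2,
   acting blockwise on the indicated qubit *)
Definition act1 (L : 'M[C]_2 -> 'M[C]_2) (rho : 'M[C]_8) : 'M[C]_8 :=
  \matrix_(i, j) (L (\matrix_(a, b) rho (q3 a (bit2 i) (bit3 i))
                                        (q3 b (bit2 j) (bit3 j))))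
                   (bit1 i) (bit1 j).
Definition act2 (L : 'M[C]_2 -> 'M[C]_2) (rho : 'M[C]_8) : 'M[C]_8 :=
  \matrix_(i, j) (L (\matrix_(a, b) rho (q3 (bit1 i) a (bit3 i))
                                        (q3 (bit1 j) b (bit3 j))))
                   (bit2 i) (bit2 j).
Definition act3 (L : 'M[C]_2 -> 'M[C]_2) (rho : 'M[C]_8) : 'M[C]_8 :=
  \matrix_(i, j) (L (\matrix_(a, b) rho (q3 (bit1 i) (bit2 i) a)
                                        (q3 (bit1 j) (bit2 j) b)))
                   (bit3 i) (bit3 j).

Definition Phi3 (kappa : C) (rho : 'M[C]_8) : 'M[C]_8 :=
  act1 Pmap rho + act2 Pmap rho + act3 Pmap rho + (kappa * \tr rho) *: 1%:M.

End QuantumDefs.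

(* Phi3 is linear and a biseparable state is a convex combination of product
   states A (x) B across the cuts 1|23, 2|13, 3|12, so it suffices to treat such
   products; as Phi3 commutes with permutations of the qubits, the cut may be
   taken to be 1|23.  On M_2, P(X) = (3 X + sx X sx + sy X sy - sz X sz) / 4 for
   the Pauli matrices sx, sy, sz.  Writing X_k, Y_k, Z_k for these acting on
   qubit k and (1/2) tr(rho) I = (Z_2 I Z_2 + Z_3 I Z_3) / 4, one gets for
   tr rho = 1
     Phi3(rho) = (P (x) I (x) I)(rho)
       + sum_(k = 2, 3) [(3 rho + X_k rho X_k + Y_k rho Y_k) / 4 + Z_k (I - rho) Z_k / 4].
   For rho = A (x) B the first term is P(A) (x) B, which is positive since P
   preserves positivity of 2 x 2 matrices (|b|^2 <= ad <= ((a + d) / 2)^2) and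
   tensor products of positive matrices are positive; the remaining terms are
   positive because rho <= tr(rho) I. *)

From HB Require Import structures.
From mathcomp Require Import all_boot all_order all_algebra.
From mathcomp Require Import ring.
Import Order.TTheory GRing.Theory Num.Theory.
Set Implicit Arguments. Unset Strict Implicit. Unset Printing Implicit Defensive.
Local Open Scope ring_scope.
Local Open Scope sesquilinear_scope.

(** * Qubit indexing *)

Lemma ord2_cases (a : 'I_2) : a = 0 \/ a = 1.
Proof. by case: a => [[|[|//]] ?]; [left | right]; apply: val_inj. Qed.

Definition fstb (k : 'I_4) : 'I_2 := inord (k %/ 2).
Definition sndb (k : 'I_4) : 'I_2 := inord (k %% 2).

Ltac bits_cases :=
  repeat match goal with a : 'I_2 |- _ => case: (ord2_cases a) => ->; clear a end.

Lemma bit1_q3 a b c : bit1 (q3 a b c) = a.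
Proof. by bits_cases; apply/val_inj; rewrite /bit1 /q3 /= !inordK. Qed.
Lemma bit2_q3 a b c : bit2 (q3 a b c) = b.
Proof. by bits_cases; apply/val_inj; rewrite /bit2 /q3 /= !inordK. Qed.
Lemma bit3_q3 a b c : bit3 (q3 a b c) = c.
Proof. by bits_cases; apply/val_inj; rewrite /bit3 /q3 /= !inordK. Qed.
Lemma fstb_q2 a b : fstb (q2 a b) = a.
Proof. by bits_cases; apply/val_inj; rewrite /fstb /q2 /= !inordK. Qed.
Lemma sndb_q2 a b : sndb (q2 a b) = b.
Proof. by bits_cases; apply/val_inj; rewrite /sndb /q2 /= !inordK. Qed.

Definition bits_q3 := (bit1_q3, bit2_q3, bit3_q3).

Lemma q3_bits i : q3 (bit1 i) (bit2 i) (bit3 i) = i.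
Proof.
by apply/val_inj; case: i => [[|[|[|[|[|[|[|[|//]]]]]]]] ?];
  rewrite /q3 /bit1 /bit2 /bit3 /= !inordK.
Qed.
Lemma q2_bits k : q2 (fstb k) (sndb k) = k.
Proof.
by apply/val_inj; case: k => [[|[|[|[|//]]]] ?]; rewrite /q2 /fstb /sndb /= !inordK.
Qed.

Lemma q3_ind (P : 'I_8 -> Prop) : (forall a b c, P (q3 a b c)) -> forall i, P i.
Proof. by move=> HP i; rewrite -(q3_bits i). Qed.

Lemma sum_I8 (V : nmodType) (F : 'I_8 -> V) :
  \sum_i F i = \sum_(a < 2) \sum_(k < 4) F (q3 a (fstb k) (sndb k)).
Proof.
rewrite pair_bigA /= (reindex (fun p : 'I_2 * 'I_4 => q3 p.1 (fstb p.2) (sndb p.2))) //.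
exists (fun i => (bit1 i, q2 (bit2 i) (bit3 i))) => [[a k] _ | i _] /=.
  by rewrite !bits_q3 q2_bits.
by rewrite fstb_q2 sndb_q2 q3_bits.
Qed.

Lemma sum_I2 (V : nmodType) (F : 'I_2 -> V) : \sum_a F a = F 0 + F 1.
Proof. by rewrite big_ord_recl big_ord1; congr (_ + F _); apply: val_inj. Qed.

(** * Positive semidefinite matrices *)

Section Psd.
Variable C : numClosedFieldType.

Lemma adjmxM m n p (A : 'M[C]_(m, n)) (B : 'M[C]_(n, p)) : (A *m B)^t* = B^t* *m A^t*.
Proof. by rewrite trmx_mul map_mxM. Qed.

Lemma adjmx_mulE m n p (U : 'M[C]_(m, n)) (M : 'M[C]_m) (V : 'M[C]_(m, p)) a b :
  (U^t* *m M *m V) a b = \sum_k \sum_l (U k a)^* * M k l * V l b.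
Proof.
rewrite mxE [RHS]exchange_big; apply: eq_bigr => l _; rewrite mxE big_distrl.
by apply: eq_bigr => k _; rewrite !mxE.
Qed.

Lemma hermitianE n (A : 'M[C]_n) : A^t* = A -> forall i j, (A i j)^* = A j i.
Proof. by move/matrixP => hA i j; rewrite -[in RHS]hA !mxE. Qed.

Lemma psdmx_add n (A B : 'M[C]_n) : psdmx A -> psdmx B -> psdmx (A + B).
Proof.
move=> [hA fA] [hB fB]; split; first by rewrite linearD map_mxD hA hB.
by move=> x; rewrite mulmxDr mulmxDl mxE addr_ge0.
Qed.

Lemma psdmx_scale n c (A : 'M[C]_n) : 0 <= c -> psdmx A -> psdmx (c *: A).
Proof.
move=> c0 [hA fA]; split; first by rewrite linearZ map_mxZ /= hA geC0_conj.
by move=> x; rewrite -scalemxAr -scalemxAl mxE mulr_ge0.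
Qed.

Lemma psdmx_sum n I (r : seq I) (P : pred I) (F : I -> 'M[C]_n) :
  (forall i, P i -> psdmx (F i)) -> psdmx (\sum_(i <- r | P i) F i).
Proof.
move=> hF; elim/big_rec: _ => [|i A Pi hA]; last exact: psdmx_add (hF _ Pi) hA.
split=> [|x]; last by rewrite mulmx0 mul0mx mxE.
by apply/matrixP => i j; rewrite !mxE conjC0.
Qed.

Lemma psdmx1 n : psdmx (1%:M : 'M[C]_n).
Proof.
split=> [|x]; first by rewrite tr_scalar_mx map_mx1.
by rewrite mulmx1 mxE sumr_ge0 // => k _; rewrite !mxE mulrC mul_conjC_ge0.
Qed.

Lemma psdmx_conj m n (M : 'M[C]_m) (U : 'M[C]_(m, n)) :
  psdmx M -> psdmx (U^t* *m M *m U).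
Proof.
move=> [hM fM]; split; first by rewrite !adjmxM trmxCK hM mulmxA.
by move=> x; rewrite -!mulmxA mulmxA -adjmxM mulmxA.
Qed.

Lemma psdmx_diag_ge0 n (M : 'M[C]_n) i : psdmx M -> 0 <= M i i.
Proof.
case=> _ /(_ (delta_mx i 0)).
by rewrite trmx_delta map_delta_mx ?rmorph_nat // -rowE -colE !mxE.
Qed.

Lemma psdmx_mxsub m n (f : 'I_n -> 'I_m) (M : 'M[C]_m) :
  psdmx M -> psdmx (mxsub f f M).
Proof.
have -> : mxsub f f M = (colsub f 1%:M)^t* *m M *m colsub f 1%:M.
  rewrite trmx_mxsub map_mxsub tr_scalar_mx map_mx1.
  by rewrite mxsubcr rowsubE mulmx_colsub mulmx1.
exact: psdmx_conj.
Qed.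

Lemma mxtrace_mxsub n (f : 'I_n -> 'I_n) (M : 'M[C]_n) :
  injective f -> \tr (mxsub f f M) = \tr M.
Proof.
by move=> f_inj; rewrite [RHS](reindex_inj f_inj); apply: eq_bigr => i _; rewrite mxE.
Qed.

Lemma mxsub_scalar_mx n (f : 'I_n -> 'I_n) (c : C) :
  injective f -> mxsub f f c%:M = c%:M.
Proof. by move=> f_inj; apply/matrixP => i j; rewrite !mxE (inj_eq f_inj). Qed.

Definition phasemx n (f : 'I_n -> C) (M : 'M[C]_n) : 'M[C]_n :=
  \matrix_(i, j) ((f i)^* * M i j * f j).

Lemma psdmx_phasemx n (f : 'I_n -> C) (M : 'M[C]_n) :
  psdmx M -> psdmx (phasemx f M).
Proof.
have -> : phasemx f M = (diag_mx (\row_i f i))^t* *m M *m diag_mx (\row_i f i).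
  rewrite tr_diag_mx map_diag_mx mul_mx_diag mul_diag_mx.
  by apply/matrixP => i j; rewrite !mxE.
exact: psdmx_conj.
Qed.

(* [2 x^* (tr B - B) x] is the sum over [p, q] of [w^* B w], where
   [w = conj(x_q) e_p - conj(x_p) e_q]. *)
Lemma psdmx_trace_sub n (B : 'M[C]_n) : psdmx B -> psdmx (\tr B *: 1%:M - B).
Proof.
move=> pB; have [hB fB] := pB.
have trB : (\tr B)^* = \tr B.
  by rewrite geC0_conj // sumr_ge0 // => i _; exact: psdmx_diag_ge0.
split; first by rewrite linearB linearZ map_mxB map_mxZ /= tr_scalar_mx map_mx1 trB hB.
move=> x.
pose W p q : 'cV[C]_n := (x q 0)^* *: delta_mx p 0 - (x p 0)^* *: delta_mx q 0.
pose g p q := x q 0 * (x q 0)^* * B p p - x q 0 * (x p 0)^* * B p q.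
have formW p q : ((W p q)^t* *m B *m W p q) 0 0 = g p q + g q p.
  have -> : (W p q)^t* = x q 0 *: delta_mx 0 p - x p 0 *: delta_mx 0 q.
    apply/matrixP => i j; rewrite !mxE rmorphB !rmorphM /= !conjCK !rmorph_nat.
    by rewrite ![(i == 0) && _]andbC.
  rewrite mulmxBl mulmxBr !mulmxBl -!scalemxAl -!scalemxAr -!rowE -!colE !mxE /g.
  ring.
have sum_g : \sum_p \sum_q g p q = (x^t* *m (\tr B *: 1%:M - B) *m x) 0 0.
  rewrite mulmxBr mulmxBl -scalemxAr mulmx1 -scalemxAl mxE.
  rewrite [X in _ + X]mxE adjmx_mulE mxE /mxtrace mulr_suml -sumrB; apply: eq_bigr => p _.
  rewrite mxE mulr_sumr -sumrB; apply: eq_bigr => q _; rewrite !mxE /g; ring.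
have : 0 <= \sum_p \sum_q ((W p q)^t* *m B *m W p q) 0 0.
  by apply: sumr_ge0 => p _; apply: sumr_ge0 => q _; exact: fB.
under eq_bigr do under eq_bigr do rewrite formW.
under eq_bigr do rewrite big_split.
by rewrite big_split /= [X in _ + X]exchange_big -mulr2n pmulrn_lge0 // sum_g.
Qed.

End Psd.

(** * The 2 x 2 case *)

Section Psd2.
Variable C : numClosedFieldType.

Definition psd2 (A : 'M[C]_2) : Prop :=
  [/\ A^t* = A, 0 <= A 0 0, 0 <= A 1 1 & `|A 0 1| ^+ 2 <= A 0 0 * A 1 1].

Definition col2 (y0 y1 : C) : 'cV[C]_2 := \col_k (if k == 0 then y0 else y1).

Lemma form_col2 (G : 'M[C]_2) y0 y1 :
  ((col2 y0 y1)^t* *m G *m col2 y0 y1) 0 0 =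
  y0^* * G 0 0 * y0 + y0^* * G 0 1 * y1 + y1^* * G 1 0 * y0 + y1^* * G 1 1 * y1.
Proof. by rewrite adjmx_mulE !sum_I2 !mxE /= addrA. Qed.

Lemma psd2_pairing_ge0 (A G : 'M[C]_2) :
  psd2 A -> psdmx G -> 0 <= \sum_a \sum_b A a b * G a b.
Proof.
case=> hA a0 d0 bd pG; have [_ fG] := pG; have g11 := psdmx_diag_ge0 1 pG.
rewrite !sum_I2 -(hermitianE hA 0 1).
move: a0; rewrite le0r => /orP[/eqP a0 | a_gt0].
  have /eqP b0 : A 0 1 == 0.
    move: bd; rewrite a0 mul0r real_exprn_even_le0 ?normr_real //.
    by rewrite normr_eq0.
  by rewrite a0 b0 conjC0 !mul0r !add0r mulr_ge0.
rewrite -(pmulr_rge0 _ a_gt0).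
have -> : A 0 0 * (A 0 0 * G 0 0 + A 0 1 * G 0 1 + ((A 0 1)^* * G 1 0 + A 1 1 * G 1 1))
    = ((col2 (A 0 0) (A 0 1))^t* *m G *m col2 (A 0 0) (A 0 1)) 0 0
      + (A 0 0 * A 1 1 - `|A 0 1| ^+ 2) * G 1 1.
  by rewrite form_col2 (geC0_conj (ltW a_gt0)) normCK; ring.
by rewrite addr_ge0 ?fG // mulr_ge0 ?subr_ge0.
Qed.

Lemma psd2_psdmx (A : 'M[C]_2) : psd2 A -> psdmx A.
Proof.
move=> pA; split=> [|x]; first by case: pA.
have pG : psdmx ((x^T)^t* *m 1%:M *m x^T) by apply/psdmx_conj/psdmx1.
have := psd2_pairing_ge0 pA pG; rewrite mulmx1 adjmx_mulE.
congr (0 <= _); apply: eq_bigr => a _; apply: eq_bigr => b _.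
by rewrite !mxE big_ord1 !mxE mulrCA mulrA.
Qed.

Lemma psdmx_psd2 (A : 'M[C]_2) : psdmx A -> psd2 A.
Proof.
move=> pA; have [hA fA] := pA.
have a0 := psdmx_diag_ge0 0 pA; have d0 := psdmx_diag_ge0 1 pA.
split=> //; rewrite normCK.
have Ab := hermitianE hA 0 1; set b := A 0 1 in Ab *.
move: (d0); rewrite le0r => /orP[/eqP d_0 | d_gt0].
  set n := b * b^*; have n0 : 0 <= n := mul_conjC_ge0 b.
  have := fA (col2 n (- ((A 0 0 + 1) * b^*))).
  rewrite form_col2 -Ab -/b d_0 (geC0_conj n0) !rmorphN rmorphM rmorphD rmorph1 /= conjCK.
  rewrite (geC0_conj a0).
  have -> : n * A 0 0 * n + n * b * - ((A 0 0 + 1) * b^*) +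
      - ((A 0 0 + 1) * b) * b^* * n + - ((A 0 0 + 1) * b) * 0 * - ((A 0 0 + 1) * b^*)
      = - ((A 0 0 + 2) * n ^+ 2) by rewrite /n; ring.
  rewrite oppr_ge0 pmulr_rle0 ?ltr_wpDl // real_exprn_even_le0 ?ger0_real //=.
  by move/eqP->; rewrite mulr0.
have := fA (col2 (A 1 1) (- b^*)).
rewrite form_col2 -Ab -/b !rmorphN /= conjCK (geC0_conj d0).
have -> : A 1 1 * A 0 0 * A 1 1 + A 1 1 * b * - b^*
    + - b * b^* * A 1 1 + - b * A 1 1 * - b^*
    = A 1 1 * (A 0 0 * A 1 1 - b * b^*) by ring.
by rewrite pmulr_rge0 // subr_ge0.
Qed.

Lemma psdmx2P (A : 'M[C]_2) : psdmx A <-> psd2 A.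
Proof. by split; [exact: psdmx_psd2 | exact: psd2_psdmx]. Qed.

Lemma psd2_Pmap (A : 'M[C]_2) : psd2 A -> psd2 (Pmap A).
Proof.
case=> hA a0 d0 bd.
have m0 : 0 <= (A 0 0 + A 1 1) / 2 by rewrite divr_ge0 ?addr_ge0.
split; rewrite ?mxE /=.
- apply/matrixP => i j; rewrite !mxE eq_sym.
  by case: eqP => _; [exact: geC0_conj | exact: hermitianE].
- exact: m0.
- exact: m0.
apply: (le_trans bd); rewrite -subr_ge0.
have -> : (A 0 0 + A 1 1) / 2 * ((A 0 0 + A 1 1) / 2) - A 0 0 * A 1 1
    = ((A 0 0 - A 1 1) / 2) ^+ 2 by field.
by rewrite real_exprn_even_ge0 // realM ?realB ?realV ?ger0_real.
Qed.

Lemma psdmx_Pmap (A : 'M[C]_2) : psdmx A -> psdmx (Pmap A).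
Proof. by move/psdmx2P/psd2_Pmap/psdmx2P. Qed.

End Psd2.

(** * Phi3 on product states *)

Section ThreeQubits.
Variable C : numClosedFieldType.

Definition qubit1_slices (x : 'cV[C]_8) : 'M[C]_(4, 2) :=
  \matrix_(k, a) x (q3 a (fstb k) (sndb k)) 0.

Lemma form_prod1_23 (A : 'M[C]_2) (M : 'M[C]_4) (x : 'cV[C]_8) :
  (x^t* *m prod1_23 A M *m x) 0 0 =
  \sum_a \sum_b A a b * ((qubit1_slices x)^t* *m M *m qubit1_slices x) a b.
Proof.
rewrite adjmx_mulE sum_I8; apply: eq_bigr => a _.
under eq_bigr do rewrite sum_I8.
rewrite exchange_big; apply: eq_bigr => b _; rewrite adjmx_mulE mulr_sumr.
apply: eq_bigr => k _; rewrite mulr_sumr; apply: eq_bigr => l _.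
by rewrite !mxE !bits_q3 !q2_bits mulrCA !mulrA.
Qed.

Lemma psdmx_prod1_23 (A : 'M[C]_2) (M : 'M[C]_4) :
  psdmx A -> psdmx M -> psdmx (prod1_23 A M).
Proof.
move=> pA pM; split=> [|x].
  have [hA _] := pA; have [hM _] := pM.
  by apply/matrixP => i j; rewrite !mxE rmorphM /= !hermitianE.
by rewrite form_prod1_23; apply: psd2_pairing_ge0 (psdmx_psd2 pA) (psdmx_conj _ pM).
Qed.

Lemma mxtrace_prod1_23 (A : 'M[C]_2) (B : 'M[C]_4) :
  \tr (prod1_23 A B) = \tr A * \tr B.
Proof.
rewrite /mxtrace sum_I8 mulr_suml; apply: eq_bigr => a _.
by rewrite mulr_sumr; apply: eq_bigr => k _; rewrite mxE !bits_q3 q2_bits.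
Qed.

Lemma act1_prod1_23 (L : 'M[C]_2 -> 'M[C]_2) (A : 'M[C]_2) (B : 'M[C]_4) :
  (forall c X, L (c *: X) = c *: L X) -> act1 L (prod1_23 A B) = prod1_23 (L A) B.
Proof.
move=> LZ; apply/matrixP => i j; rewrite !mxE.
set k := q2 (bit2 i) (bit3 i); set l := q2 (bit2 j) (bit3 j).
have -> : \matrix_(a, b) prod1_23 A B (q3 a (bit2 i) (bit3 i)) (q3 b (bit2 j) (bit3 j))
    = B k l *: A by apply/matrixP => a b; rewrite !mxE !bits_q3 mulrC.
by rewrite LZ mxE mulrC.
Qed.

Lemma PmapZ c (X : 'M[C]_2) : Pmap (c *: X) = c *: Pmap X.
Proof. by apply/matrixP => a b; rewrite !mxE; case: eqP => _ //; ring. Qed.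

(* [mxsub f f] and [phasemx s] are the conjugations by X and Z on the qubit
   that [f] flips and [s] signs; their composite is the conjugation by Y. *)
Definition pauli_cp n (f : 'I_n -> 'I_n) (s : 'I_n -> C) (M : 'M[C]_n) : 'M[C]_n :=
  (3 / 4) *: M + (1 / 4) *: mxsub f f M + (1 / 4) *: phasemx s (mxsub f f M).

Lemma psdmx_pauli_cp n f s (M : 'M[C]_n) : psdmx M -> psdmx (pauli_cp f s M).
Proof.
move=> pM; apply: psdmx_add; first apply: psdmx_add;
  (apply: psdmx_scale; first by rewrite divr_ge0 ?ler0n).
- exact: pM.
- exact: psdmx_mxsub.
- exact/psdmx_phasemx/psdmx_mxsub.
Qed.

Definition sign (a : 'I_2) : C := if a == 0 then 1 else -1.
Definition flip2 (i : 'I_8) : 'I_8 := q3 (bit1 i) (1 - bit2 i) (bit3 i).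
Definition flip3 (i : 'I_8) : 'I_8 := q3 (bit1 i) (bit2 i) (1 - bit3 i).

Lemma act2_Pmap (rho : 'M[C]_8) :
  act2 (@Pmap C) rho =
  pauli_cp flip2 (sign \o bit2) rho - (1 / 4) *: phasemx (sign \o bit2) rho.
Proof.
apply/matrixP => i j; elim/q3_ind: i => a1 a2 a3; elim/q3_ind: j => b1 b2 b3.
rewrite !mxE /= /flip2 !bits_q3.
case: (ord2_cases a2) => ->; case: (ord2_cases b2) => ->;
  rewrite /sign /= ?subr0 ?subrr ?rmorphN ?rmorph1; by field.
Qed.

Lemma act3_Pmap (rho : 'M[C]_8) :
  act3 (@Pmap C) rho =
  pauli_cp flip3 (sign \o bit3) rho - (1 / 4) *: phasemx (sign \o bit3) rho.
Proof.
apply/matrixP => i j; elim/q3_ind: i => a1 a2 a3; elim/q3_ind: j => b1 b2 b3.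
rewrite !mxE /= /flip3 !bits_q3.
case: (ord2_cases a3) => ->; case: (ord2_cases b3) => ->;
  rewrite /sign /= ?subr0 ?subrr ?rmorphN ?rmorph1; by field.
Qed.

Lemma phasemx_sign_1B (t : 'I_8 -> 'I_2) (M : 'M[C]_8) :
  phasemx (sign \o t) (1%:M - M) = 1%:M - phasemx (sign \o t) M.
Proof.
apply/matrixP => i j; rewrite !mxE /=.
case: eqP => [<-|_]; last by rewrite !mulr0n !sub0r; ring.
by rewrite /sign; case: ifP => _; rewrite ?rmorphN rmorph1 /=; ring.
Qed.

Lemma Phi3_decomp (rho : 'M[C]_8) : \tr rho = 1 ->
  Phi3 (1 / 2) rho = act1 (@Pmap C) rho
    + pauli_cp flip2 (sign \o bit2) rho + pauli_cp flip3 (sign \o bit3) rho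
    + (1 / 4) *: (phasemx (sign \o bit2) (1%:M - rho)
                  + phasemx (sign \o bit3) (1%:M - rho)).
Proof.
move=> tr1; rewrite /Phi3 act2_Pmap act3_Pmap tr1 !phasemx_sign_1B.
move: (act1 _ _) (pauli_cp _ _ _) (pauli_cp _ _ _) (phasemx _ rho) (phasemx _ rho).
move=> X1 X2 X3 Z2 Z3; apply/matrixP => i j; rewrite !mxE; by field.
Qed.

Lemma psdmx_Phi3_prod1_23 (A : 'M[C]_2) (B : 'M[C]_4) :
  density A -> density B -> psdmx (Phi3 (1 / 2) (prod1_23 A B)).
Proof.
move=> [pA trA] [pB trB]; have prho := psdmx_prod1_23 pA pB.
have tr1 : \tr (prod1_23 A B) = 1 by rewrite mxtrace_prod1_23 trA trB mulr1.
have p1rho : psdmx (1%:M - prod1_23 A B).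
  by have := psdmx_trace_sub prho; rewrite tr1 scale1r.
rewrite Phi3_decomp // (act1_prod1_23 _ _ (@PmapZ)).
apply: psdmx_add; first apply: psdmx_add; first apply: psdmx_add.
- exact/psdmx_prod1_23/pB/psdmx_Pmap.
- exact: psdmx_pauli_cp.
- exact: psdmx_pauli_cp.
- apply: psdmx_scale; first by rewrite divr_ge0 ?ler0n.
  by apply: psdmx_add; apply: psdmx_phasemx.
Qed.

Definition swap12 (i : 'I_8) : 'I_8 := q3 (bit2 i) (bit1 i) (bit3 i).
Definition rot3 (i : 'I_8) : 'I_8 := q3 (bit3 i) (bit1 i) (bit2 i).

Lemma eq_bits (i j : 'I_8) :
  bit1 i = bit1 j -> bit2 i = bit2 j -> bit3 i = bit3 j -> i = j.
Proof. by move=> e1 e2 e3; rewrite -(q3_bits i) -(q3_bits j) e1 e2 e3. Qed.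

Lemma swap12_inj : injective swap12.
Proof.
move=> i j e; apply: eq_bits;
  [move/(congr1 bit2): e | move/(congr1 bit1): e | move/(congr1 bit3): e];
  by rewrite !bits_q3.
Qed.

Lemma rot3_inj : injective rot3.
Proof.
move=> i j e; apply: eq_bits;
  [move/(congr1 bit2): e | move/(congr1 bit3): e | move/(congr1 bit1): e];
  by rewrite !bits_q3.
Qed.

Lemma prod2_13E (A : 'M[C]_2) (B : 'M[C]_4) :
  prod2_13 A B = mxsub swap12 swap12 (prod1_23 A B).
Proof. by apply/matrixP => i j; rewrite !mxE /swap12 !bits_q3. Qed.

Lemma prod3_12E (A : 'M[C]_2) (B : 'M[C]_4) :
  prod3_12 A B = mxsub rot3 rot3 (prod1_23 A B).
Proof. by apply/matrixP => i j; rewrite !mxE /rot3 !bits_q3. Qed.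

Section Relabel.
Variables (L : 'M[C]_2 -> 'M[C]_2) (rho : 'M[C]_8).

Lemma act_swap12 : let s := mxsub swap12 swap12 in
  [/\ act1 L (s rho) = s (act2 L rho), act2 L (s rho) = s (act1 L rho)
    & act3 L (s rho) = s (act3 L rho)].
Proof.
by split; apply/matrixP => i j; rewrite !mxE /swap12 !bits_q3; congr ((L _) _ _);
  apply/matrixP => a b; rewrite !mxE !bits_q3.
Qed.

Lemma act_rot3 : let s := mxsub rot3 rot3 in
  [/\ act1 L (s rho) = s (act2 L rho), act2 L (s rho) = s (act3 L rho)
    & act3 L (s rho) = s (act1 L rho)].
Proof.
by split; apply/matrixP => i j; rewrite !mxE /rot3 !bits_q3; congr ((L _) _ _);
  apply/matrixP => a b; rewrite !mxE !bits_q3.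
Qed.

End Relabel.

Lemma Phi3_swap12 k (rho : 'M[C]_8) :
  Phi3 k (mxsub swap12 swap12 rho) = mxsub swap12 swap12 (Phi3 k rho).
Proof.
have [e1 e2 e3] := act_swap12 (@Pmap C) rho.
rewrite /Phi3 !scalemx1 e1 e2 e3 mxtrace_mxsub ?raddfD /= ?mxsub_scalar_mx //;
  try exact: swap12_inj.
by rewrite [mxsub _ _ (act2 _ _) + _]addrC.
Qed.

Lemma Phi3_rot3 k (rho : 'M[C]_8) :
  Phi3 k (mxsub rot3 rot3 rho) = mxsub rot3 rot3 (Phi3 k rho).
Proof.
have [e1 e2 e3] := act_rot3 (@Pmap C) rho.
rewrite /Phi3 !scalemx1 e1 e2 e3 mxtrace_mxsub ?raddfD /= ?mxsub_scalar_mx //;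
  try exact: rot3_inj.
by rewrite [X in X + _ = _]addrC addrA.
Qed.

Lemma Phi3_is_linear k : linear (@Phi3 C k).
Proof.
move=> a X Y; apply/matrixP => i j.
rewrite /Phi3 /act1 /act2 /act3 /Pmap mxtraceD mxtraceZ !mxE.
by do 3 case: eqP => _; ring.
Qed.

HB.instance Definition _ k :=
  GRing.isLinear.Build C 'M[C]_8 'M[C]_8 _ (Phi3 k) (Phi3_is_linear k).

Lemma psdmx_Phi3_prod_cut k (A : 'M[C]_2) (B : 'M[C]_4) :
  density A -> density B -> psdmx (Phi3 (1 / 2) (prod_cut k A B)).
Proof.
move=> dA dB; rewrite /prod_cut.
case: ifP => _; first exact: psdmx_Phi3_prod1_23.
by case: ifP => _; [rewrite prod2_13E Phi3_swap12 | rewrite prod3_12E Phi3_rot3];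
  apply/psdmx_mxsub/psdmx_Phi3_prod1_23.
Qed.

Lemma psdmx_Phi3_sep_cut k (rho : 'M[C]_8) :
  sep_cut k rho -> psdmx (Phi3 (1 / 2) rho).
Proof.
move=> [N [w [A [B [w0 [_ [dA [dB ->]]]]]]]].
rewrite linear_sum; apply: psdmx_sum => t _; rewrite linearZ.
exact/psdmx_scale/psdmx_Phi3_prod_cut.
Qed.

End ThreeQubits.

Unset Implicit Arguments.

Theorem theorem1 (C : numClosedFieldType) (rho : 'M[C]_8) :
  biseparable rho -> psdmx (Phi3 (1 / 2) rho).
Proof.
move=> [p1 [p2 [p3 [s1 [s2 [s3 [p1_ge0 [p2_ge0 [p3_ge0 [_ [sep1 [sep2 [sep3 ->]]]]]]]]]]]]].
rewrite !linearD !linearZ.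
apply: psdmx_add; first apply: psdmx_add.
- exact: psdmx_scale p1_ge0 (psdmx_Phi3_sep_cut sep1).
- exact: psdmx_scale p2_ge0 (psdmx_Phi3_sep_cut sep2).
- exact: psdmx_scale p3_ge0 (psdmx_Phi3_sep_cut sep3).
Qed.
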